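(* Wilf equivalence partitions the set $\mathbb{P}^3$ of words of length 3 into the following equivalence classes: (1) $\{aaa\}$ for each $a\in\mathbb{P}$; (2) for $a<b$: $\{aab,aba,baa\}$; (3) for $a>b$: $\{aab,baa\}$ and $\{aba\}$; (4) for $a<b<c$: $\{bac,cab\}$ and $\{abc,acb,cba,bca\}$.
   Context: $\mathbb{P}$ is the set of positive integers with the usual order, $\mathbb{P}^*$ the finite words over $\mathbb{P}$, $\mathbb{P}^3$ the words of length 3. For $w=w_1\ldots w_n$, $\mathrm{wt}(w)=t^nx^{\sum_iw_i}$. For words $u,w$, $u\le w$ if there are $|u|$ consecutive letters of $w$ whose $i$-th letter is $\ge$ the $i$-th letter of $u$ for each $i$. $F(u;t,x)=\sum_{w:\,u\le w}\mathrm{wt}(w)$ and $u\backsim v$ (Wilf equivalence) iff $F(u;t,x)=F(v;t,x)$. *)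

From mathcomp Require Import all_boot.
Set Implicit Arguments. Unset Strict Implicit. Unset Printing Implicit Defensive.

Definition pword (w : seq nat) : bool := all (fun i => 0 < i) w.

Definition pat_le (u w : seq nat) : bool :=
  [exists i : 'I_(size w).+1,
     (i + size u <= size w) &&
     [forall j : 'I_(size u), nth 0 u j <= nth 0 w (i + j)]].

(* Coefficient of t^n x^m in F(u;t,x) = sum_{w in P^*, u <= w} t^|w| x^(sum w):
   the number of words w in P^* of length n and letter sum m with u <= w.
   (Every positive word of sum m has letters <= m, so n-tuples over 'I_m.+1
   enumerate all candidates.) *)
Definition Fcoef (u : seq nat) (n m : nat) : nat :=
  #|[set w : n.-tuple 'I_m.+1 |
      [&& pword (map val w), sumn (map val w) == m & pat_le u (map val w)]]|.

Definition wilf (u v : seq nat) : Prop := forall n m, Fcoef u n m = Fcoef v n m.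

Definition listed_block (B : seq (seq nat)) : Prop :=
  (exists a, 0 < a /\ B = [:: [:: a; a; a]]) \/
  (exists a b, 0 < a /\ a < b /\ B = [:: [:: a; a; b]; [:: a; b; a]; [:: b; a; a]]) \/
  (exists a b, 0 < b /\ b < a /\
     (B = [:: [:: a; a; b]; [:: b; a; a]] \/ B = [:: [:: a; b; a]])) \/
  (exists a b c, 0 < a /\ a < b /\ b < c /\
     (B = [:: [:: b; a; c]; [:: c; a; b]] \/
      B = [:: [:: a; b; c]; [:: a; c; b]; [:: c; b; a]; [:: b; c; a]])).

From mathcomp Require Import all_boot zify.
Set Implicit Arguments. Unset Strict Implicit. Unset Printing Implicit Defensive.

(* The relation u <= w says that w dominates letterwise, at some position p,
   the bound occ_bound u p imposed by an occurrence of u there.  Lowering each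
   letter of a positive word by a bound f (padded up to 1) shows that the
   number of positive words of length n and sum m dominating f depends only on
   the weight sum_i max(1, f i): it is the number [slack_count] of ways to
   distribute the remaining sum.
   By inclusion-exclusion over the set of occurrence positions, F(u) is thus
   determined by the weights of the joint bounds of all sets of positions.
   For u = x y z and v = x z y with x <= y <= z these weights differ exactly by
   (z - y) times (positions carrying a middle letter - positions carrying a
   last letter) = 0, so u and v are Wilf equivalent; reversal gives the other
   equivalences.  Conversely, the coefficients for words of length 3, 4 and 5
   recover the letter sum, the weight of two overlapping occurrences, and the
   multiset equality {gap u, full v} = {gap v, full u} between the weights of
   occurrences at positions {0, 2} and {0, 1, 2}; once the order of the letters
   is fixed these are linear equations, and they separate the listed classes. *)

(** * Positive words above a letterwise bound *)

Section BoundedWords.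

Variables n m : nat.
Implicit Types (w z : n.-tuple 'I_m.+1) (f g : nat -> nat).

Definition tuple_sum w := \sum_(i < n) (tnth w i : nat).

Definition positive_words : {set n.-tuple 'I_m.+1} :=
  [set w : n.-tuple 'I_m.+1 | pword (map val w) && (sumn (map val w) == m)].

Definition dominating f : {set n.-tuple 'I_m.+1} :=
  [set w : n.-tuple 'I_m.+1 | [forall i : 'I_n, f i <= tnth w i]].

Definition min_weight f := \sum_(i < n) maxn 1 (f i).

Definition slack_count T := #|[set z : n.-tuple 'I_m.+1 | tuple_sum z + T == m]|.

Lemma sumn_map_val w : sumn (map val w) = tuple_sum w.
Proof. by rewrite sumnE big_map big_tuple. Qed.

Lemma tnth_le_tuple_sum w i : tnth w i <= tuple_sum w.
Proof. by rewrite /tuple_sum (bigD1 i) //= leq_addr. Qed.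

Lemma mem_positive_dominating f w :
  (w \in positive_words :&: dominating f) =
  [forall i : 'I_n, maxn 1 (f i) <= tnth w i] && (tuple_sum w == m).
Proof.
rewrite !inE sumn_map_val andbAC; congr (_ && _).
apply/andP/forallP => [[/all_tnthP w_gt0 /forallP f_le] i | max_le].
  by rewrite geq_max; apply/andP; split; [have := w_gt0 i; rewrite tnth_map|].
split; [apply/all_tnthP => i; rewrite tnth_map | apply/forallP => i];
  by have := max_le i; rewrite geq_max => /andP[].
Qed.

(* Subtracting the bound [maxn 1 (f i)] letterwise is a bijection onto the
   tuples of sum [m - min_weight f]. *)
Lemma card_positive_dominating f :
  #|positive_words :&: dominating f| = slack_count (min_weight f).
Proof.
pose l i := maxn 1 (f i).
pose Z := [set z : n.-tuple 'I_m.+1 | tuple_sum z + min_weight f == m].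
pose shift z : n.-tuple 'I_m.+1 := [tuple inord (tnth z i + l i) | i < n].
have l_le_weight (i : 'I_n) : l i <= min_weight f.
  by rewrite /min_weight (bigD1 i) //= leq_addr.
have tnth_shift z (i : 'I_n) : z \in Z -> (tnth (shift z) i : nat) = tnth z i + l i.
  rewrite inE => /eqP sum_z; rewrite tnth_mktuple inordK // ltnS.
  by have := tnth_le_tuple_sum z i; have := l_le_weight i; lia.
have tuple_sum_shift z : z \in Z -> tuple_sum (shift z) = tuple_sum z + min_weight f.
  move=> Zz; rewrite /tuple_sum /min_weight -big_split.
  by apply: eq_bigr => i _; rewrite tnth_shift.
rewrite /slack_count -/Z -(card_in_imset (f := shift)); last first.
  move=> z1 z2 Zz1 Zz2 eq12; apply: eq_from_tnth => i; apply: val_inj.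
  by apply: (@addIn (l i)); rewrite -!tnth_shift // eq12.
apply: eq_card => w; rewrite mem_positive_dominating.
apply/andP/imsetP => [[/forallP l_le /eqP sum_w] | [z Zz ->]].
  pose z : n.-tuple 'I_m.+1 := [tuple inord (tnth w i - l i) | i < n].
  have tnth_z (i : 'I_n) : (tnth z i : nat) = tnth w i - l i.
    by rewrite tnth_mktuple inordK // ltnS (leq_trans (leq_subr _ _)) // -ltnS.
  have Zz : z \in Z.
    rewrite inE; apply/eqP; rewrite -[RHS]sum_w /tuple_sum /min_weight -big_split.
    by apply: eq_bigr => i _ /=; rewrite tnth_z subnK // l_le.
  exists z => //; apply: eq_from_tnth => i; apply: val_inj => /=.
  by rewrite tnth_shift // tnth_z subnK // l_le.
split; first by apply/forallP => i; rewrite tnth_shift // leq_addl.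
by rewrite tuple_sum_shift //; move: Zz; rewrite inE.
Qed.

Lemma positive_dominatingI f g :
  (positive_words :&: dominating f) :&: (positive_words :&: dominating g) =
  positive_words :&: dominating (fun q => maxn (f q) (g q)).
Proof.
apply/setP => w; rewrite !in_setI; case: (w \in positive_words) => //=; rewrite !inE.
apply/andP/forallP => [[/forallP f_le /forallP g_le] i | max_le].
  by rewrite geq_max f_le g_le.
by split; apply/forallP => i; have := max_le i; rewrite geq_max => /andP[].
Qed.

Lemma bigcap_dominating k (P : pred nat) (F : nat -> nat -> nat) :
  \bigcap_(0 <= p < k | P p) dominating (F p) =
  dominating (fun q => \max_(p < k | P p) F p q).
Proof.
rewrite big_mkord; apply/setP => w; rewrite [in RHS]inE.
apply/bigcapP/forallP => [F_le q | max_le p Pp].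
  by apply/bigmax_leqP => p Pp; have := F_le p Pp; rewrite inE => /forallP.
rewrite inE; apply/forallP => q; apply: leq_trans (max_le q).
exact: (@leq_bigmax_cond _ (fun p : 'I_k => P p) (fun p : 'I_k => F p q) p Pp).
Qed.

End BoundedWords.

Lemma slack_count_gt n m T : m < T -> slack_count n m T = 0.
Proof.
move=> lt_mT; apply/eqP; rewrite cards_eq0; apply/eqP/setP => z.
by rewrite !inE gtn_eqF // ltn_addl.
Qed.

Lemma slack_count_self_gt0 n T : 0 < slack_count n T T.
Proof.
apply/card_gt0P; exists [tuple (ord0 : 'I_T.+1) | _ < n].
by rewrite inE /tuple_sum big1 // => i _; rewrite tnth_mktuple.
Qed.

(* The least [m] with [slack_count n m T != 0] is [T]. *)
Lemma slack_count_inj n T T' :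
  (forall m, slack_count n m T = slack_count n m T') -> T = T'.
Proof.
move=> eqTT'; case: (ltngtP T T') => // [lt_TT' | lt_T'T].
  by have := slack_count_self_gt0 n T; rewrite eqTT' slack_count_gt.
by have := slack_count_self_gt0 n T'; rewrite -eqTT' slack_count_gt.
Qed.

Lemma slack_count_pair_inj n T1 T2 T3 T4 :
  (forall m, slack_count n m T1 + slack_count n m T2 =
             slack_count n m T3 + slack_count n m T4) ->
  (T1 = T3 /\ T2 = T4) \/ (T1 = T4 /\ T2 = T3).
Proof.
pose sc := slack_count n.
have sorted_pair_inj S1 S2 S3 S4 : S1 <= S2 -> S3 <= S4 ->
    (forall m, sc m S1 + sc m S2 = sc m S3 + sc m S4) -> S1 = S3 /\ S2 = S4.
  move=> le12 le34 eqS.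
  have eq13 : S1 = S3.
    case: (ltngtP S1 S3) => // [lt13 | lt31].
      have := eqS S1; have := slack_count_self_gt0 n S1.
      by rewrite /sc (@slack_count_gt _ _ S3) 1?(@slack_count_gt _ _ S4); lia.
    have := eqS S3; have := slack_count_self_gt0 n S3.
    by rewrite /sc (@slack_count_gt _ _ S1) 1?(@slack_count_gt _ _ S2); lia.
  split => //; apply: (@slack_count_inj n) => m.
  by apply/eqP; rewrite -(eqn_add2l (sc m S1)) eqS eq13.
move=> eqT; case: (leqP T1 T2) => le12; case: (leqP T3 T4) => le34.
- by left; apply: sorted_pair_inj.
- right; apply: sorted_pair_inj; rewrite ?(ltnW le34) // => m.
  by rewrite eqT addnC.
- right; apply/and_comm; apply: sorted_pair_inj; rewrite ?(ltnW le12) // => m.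
  by rewrite addnC eqT.
- left; apply/and_comm.
  apply: sorted_pair_inj; rewrite ?(ltnW le12) ?(ltnW le34) // => m.
  by rewrite addnC eqT addnC.
Qed.

(** * Patterns as unions of bounds *)

Lemma bigcap_nat_recr_cond (T : finType) k (P : pred nat) (A : nat -> {set T}) :
  \bigcap_(0 <= p < k.+1 | P p) A p =
  if P k then (\bigcap_(0 <= p < k | P p) A p) :&: A k
  else \bigcap_(0 <= p < k | P p) A p.
Proof. by rewrite big_mkcond big_nat_recr //= -big_mkcond; case: (P k); rewrite ?setIT. Qed.

Lemma eq_bigcap_nat_cond (T : finType) k (P Q : pred nat) (A : nat -> {set T}) :
  {in gtn k, P =1 Q} ->
  \bigcap_(0 <= p < k | P p) A p = \bigcap_(0 <= p < k | Q p) A p.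
Proof. by move=> eqPQ; apply: congr_big_nat => // p /andP[_ /eqPQ]. Qed.

(* Inclusion-exclusion, stated without signs. *)
Lemma card_bigcup_eq (T : finType) k (A B : nat -> {set T}) (C D : {set T}) :
  (forall P : pred nat, #|C :&: \bigcap_(0 <= p < k | P p) A p| =
                        #|D :&: \bigcap_(0 <= p < k | P p) B p|) ->
  #|C :&: \bigcup_(0 <= p < k) A p| = #|D :&: \bigcup_(0 <= p < k) B p|.
Proof.
elim: k A B C D => [|k IHk] A B C D eqI; first by rewrite !big_geq // !setI0 !cards0.
have restrict (P : pred nat) (E : nat -> {set T}) (b : bool) :
    \bigcap_(0 <= p < k | if p == k then b else P p) E p =
    \bigcap_(0 <= p < k | P p) E p.
  by apply: eq_bigcap_nat_cond => p /= lt_pk; rewrite ltn_eqF.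
have eq_old : #|C :&: \bigcup_(0 <= p < k) A p| = #|D :&: \bigcup_(0 <= p < k) B p|.
  apply: IHk => P; have := eqI (fun p => if p == k then false else P p).
  by rewrite !bigcap_nat_recr_cond eqxx !restrict.
have eq_new : #|C :&: A k| = #|D :&: B k|.
  have := eqI (fun p => if p == k then true else xpred0 p).
  by rewrite !bigcap_nat_recr_cond eqxx !restrict !big_pred0 // !setTI.
have trace_setI (X Y Z : {set T}) : X :&: (Y :&: Z) = (X :&: Z) :&: Y.
  by rewrite setIA setIAC.
have eq_both : #|(C :&: \bigcup_(0 <= p < k) A p) :&: (C :&: A k)| =
               #|(D :&: \bigcup_(0 <= p < k) B p) :&: (D :&: B k)|.
  rewrite setIACA setIid trace_setI [in RHS]setIACA setIid [in RHS]trace_setI.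
  apply: IHk => P; have := eqI (fun p => if p == k then true else P p).
  by rewrite !bigcap_nat_recr_cond eqxx !restrict trace_setI [in RHS]trace_setI.
rewrite !big_nat_recr //= !setIUr.
have := cardsUI (C :&: \bigcup_(0 <= p < k) A p) (C :&: A k).
have := cardsUI (D :&: \bigcup_(0 <= p < k) B p) (D :&: B k).
lia.
Qed.

Lemma pat_leP u s :
  reflect (exists2 p, p + size u <= size s &
             forall j, j < size u -> nth 0 u j <= nth 0 s (p + j))
          (pat_le u s).
Proof.
apply: (iffP existsP) => [[i /andP[le_is /forallP u_le]] | [p le_ps u_le]].
  by exists i => // j lt_j; apply: (u_le (Ordinal lt_j)).
have lt_p : p < (size s).+1 by lia.
exists (Ordinal lt_p); rewrite le_ps; apply/forallP => j; exact: u_le.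
Qed.

(* The letterwise lower bound imposed by an occurrence of [u] at position [p]. *)
Definition occ_bound (u : seq nat) p q := if p <= q then nth 0 u (q - p) else 0.

Definition joint_bound k (P : pred nat) u q := \max_(p < k | P p) occ_bound u p q.

Lemma nth_map_val n m (w : n.-tuple 'I_m.+1) (i : 'I_n) : nth 0 (map val w) i = tnth w i.
Proof. by rewrite (nth_map ord0) ?size_tuple // -tnth_nth. Qed.

Lemma pat_le_bigcup u n m (w : n.-tuple 'I_m.+1) : 0 < size u ->
  pat_le u (map val w) =
  (w \in \bigcup_(p < n - (size u).-1) dominating n m (occ_bound u p)).
Proof.
move=> u_gt0; apply/pat_leP/bigcupP => [[p le_pn u_le] | [p _]].
  have lt_p : p < n - (size u).-1 by rewrite size_map size_tuple in le_pn; lia.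
  exists (Ordinal lt_p) => //; rewrite inE; apply/forallP => q /=.
  rewrite /occ_bound; case: (leqP p q) => // le_pq.
  case: (ltnP (q - p) (size u)) => [lt_qp | ?]; last by rewrite nth_default.
  by have := u_le _ lt_qp; rewrite subnKC // (nth_map_val w q).
rewrite inE => /forallP dom_w; have := ltn_ord p.
exists p => [|j lt_j]; first by rewrite size_map size_tuple; lia.
have lt_pj : p + j < n by lia.
by have := dom_w (Ordinal lt_pj); rewrite /occ_bound /= leq_addr addKn -(nth_map_val w).
Qed.

Lemma Fcoef_bigcup u n m : 0 < size u ->
  Fcoef u n m =
  #|positive_words n m :&:
    \bigcup_(0 <= p < n - (size u).-1) dominating n m (occ_bound u p)|.
Proof.
move=> u_gt0; rewrite big_mkord; apply: eq_card => w.
by rewrite in_setI -pat_le_bigcup // !inE andbA.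
Qed.

(** * Sufficient conditions for Wilf equivalence *)

Lemma wilf_refl u : wilf u u.
Proof. by []. Qed.

Lemma wilf_sym u v : wilf u v -> wilf v u.
Proof. by move=> eq_uv n m; rewrite eq_uv. Qed.

Lemma wilf_trans u v w : wilf u v -> wilf v w -> wilf u w.
Proof. by move=> eq_uv eq_vw n m; rewrite eq_uv eq_vw. Qed.

Lemma wilf_of_min_weight u v : 0 < size u -> size v = size u ->
  (forall n (P : pred nat), min_weight n (joint_bound (n - (size u).-1) P u) =
                            min_weight n (joint_bound (n - (size u).-1) P v)) ->
  wilf u v.
Proof.
move=> u_gt0 size_vu eq_weight n m; rewrite !Fcoef_bigcup ?size_vu //.
apply: card_bigcup_eq => P.
by rewrite !bigcap_dominating !card_positive_dominating eq_weight.
Qed.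

(* Position [q] carries the [j]-th letter of an occurrence starting in [P]. *)
Definition covered k (P : pred nat) j q := [&& j <= q, q - j < k & P (q - j)].

Lemma joint_bound_covered k P u q :
  joint_bound k P u q = \max_(j < size u) covered k P j q * nth 0 u j.
Proof.
apply/eqP; rewrite eqn_leq; apply/andP; split.
  apply/bigmax_leqP => p Pp; rewrite /occ_bound; case: (leqP p q) => // le_pq.
  case: (ltnP (q - p) (size u)) => [lt_j | ?]; last by rewrite nth_default.
  have cov : covered k P (q - p) q by rewrite /covered leq_subr subKn // ltn_ord.
  have -> : nth 0 u (q - p) = covered k P (q - p) q * nth 0 u (q - p).
    by rewrite cov mul1n.
  exact: (@leq_bigmax _ (fun j : 'I_(size u) => covered k P j q * nth 0 u j)
                         (Ordinal lt_j)).
apply/bigmax_leqP => j _; case cov: (covered k P j q); rewrite ?mul0n // mul1n.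
case/and3P: cov => le_jq lt_k Pqj.
apply: leq_trans (@leq_bigmax_cond _ (fun p : 'I_k => P p)
  (fun p : 'I_k => occ_bound u p q) (Ordinal lt_k) Pqj).
by rewrite /occ_bound /= leq_subr subKn.
Qed.

Lemma sum_covered2 n P :
  \sum_(q < n) covered (n - 2) P 2 q = \sum_(q < n) covered (n - 2) P 1 q.
Proof.
case: n => [|n]; first by rewrite !big_ord0.
rewrite big_ord_recl big_ord_recr /= add0n.
have -> : covered (n.+1 - 2) P 1 n = false by rewrite /covered; lia.
by rewrite addn0; apply: eq_bigr => q _; rewrite /covered /bump /= add1n subSS.
Qed.

Definition letter_bound x y z (c0 c1 c2 : bool) :=
  maxn 1 (maxn (c0 * x) (maxn (c1 * y) (c2 * z))).

(* If the bounds differ by [d] on positions carrying the middle letter versus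
   the last letter of an occurrence, the weights agree: every occurrence
   contributes exactly one position of each kind. *)
Lemma wilf_of_letter_bound x y z x' y' z' d :
  (forall c0 c1 c2 : bool,
     letter_bound x y z c0 c1 c2 + d * c1 = letter_bound x' y' z' c0 c1 c2 + d * c2) ->
  wilf [:: x; y; z] [:: x'; y'; z'].
Proof.
move=> eq_bound; apply: wilf_of_min_weight => // n P /=.
have : \sum_(q < n) (maxn 1 (joint_bound (n - 2) P [:: x; y; z] q)
                     + d * covered (n - 2) P 1 q) =
       \sum_(q < n) (maxn 1 (joint_bound (n - 2) P [:: x'; y'; z'] q)
                     + d * covered (n - 2) P 2 q).
  apply: eq_bigr => q _; rewrite !joint_bound_covered !big_ord_recl big_ord0 !maxn0.
  exact: eq_bound.
by rewrite !big_split -!big_distrr /= sum_covered2; apply: addIn.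
Qed.

Lemma wilf_swap23 x y z : 0 < y -> x <= y -> y <= z -> wilf [:: x; y; z] [:: x; z; y].
Proof.
move=> y_gt0 le_xy le_yz; apply: (@wilf_of_letter_bound _ _ _ _ _ _ (z - y)).
by case; case; case; rewrite /letter_bound /=; lia.
Qed.

Lemma pat_le_rev u s : pat_le u s -> pat_le (rev u) (rev s).
Proof.
move/pat_leP => [p le_ps u_le]; apply/pat_leP; rewrite !size_rev.
exists (size s - size u - p) => [|j lt_j]; first by lia.
rewrite nth_rev // nth_rev; last by lia.
have -> : size s - (size s - size u - p + j).+1 = p + (size u - j.+1) by lia.
by apply: u_le; lia.
Qed.

Lemma Fcoef_rev u n m : Fcoef (rev u) n m = Fcoef u n m.
Proof.
pose rev_tuple (w : n.-tuple 'I_m.+1) := [tuple of rev w].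
have rev_inj : injective rev_tuple.
  by move=> w1 w2 /(congr1 (fun w => rev (val w))); rewrite !revK => /val_inj.
rewrite /Fcoef -(card_preimset _ rev_inj); apply: eq_card => w.
rewrite !inE /rev_tuple /= map_rev /pword all_rev sumn_rev.
by congr [&& _, _ & _]; apply/idP/idP => /pat_le_rev //; rewrite !revK.
Qed.

Lemma wilf_rev u : wilf u (rev u).
Proof. by move=> n m; rewrite Fcoef_rev. Qed.

(** * Invariants read off words of length 3, 4 and 5 *)

Lemma cardsU3 (T : finType) (A B C : {set T}) :
  #|A :|: B :|: C| + #|A :&: B| + #|A :&: C| + #|B :&: C| =
  #|A| + #|B| + #|C| + #|A :&: B :&: C|.
Proof.
have := cardsUI (A :|: B) C; have := cardsUI A B; have := cardsUI (A :&: C) (B :&: C).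
by rewrite setIUl setIACA setIid setIAC; lia.
Qed.

Lemma maxn1_gt0 a : 0 < a -> maxn 1 a = a.
Proof. by move/maxn_idPr. Qed.

(* The weights of the joint bounds of occurrences at positions 0, 1 in words of
   length 4, and at positions 0, 2 and 0, 1, 2 in words of length 5. *)
Definition weight4 x y z := x + maxn y x + maxn z y + z.
Definition weight5_gap x y z := x + y + maxn z x + y + z.
Definition weight5_full x y z := x + maxn y x + maxn (maxn z y) x + maxn z y + z.

Section LowCoefficients.

Variables (x y z m : nat).
Hypotheses (x_gt0 : 0 < x) (y_gt0 : 0 < y) (z_gt0 : 0 < z).

Ltac compute_weight :=
  rewrite /min_weight !big_ord_recr big_ord0 /= /occ_bound /= ?maxn0 ?max0n ?add0n;
  rewrite ?maxn1_gt0 ?leq_max ?x_gt0 ?y_gt0 ?z_gt0 ?orbT //.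

Lemma Fcoef_len3 : Fcoef [:: x; y; z] 3 m = slack_count 3 m (x + y + z).
Proof.
rewrite Fcoef_bigcup // big_nat1 card_positive_dominating; congr slack_count.
by compute_weight.
Qed.

Lemma Fcoef_len4 :
  Fcoef [:: x; y; z] 4 m + slack_count 4 m (weight4 x y z) =
  slack_count 4 m (x + y + z + 1) + slack_count 4 m (x + y + z + 1).
Proof.
rewrite Fcoef_bigcup // /= !big_nat_recr //= big_geq // set0U setIUr.
have w0 : min_weight 4 (occ_bound [:: x; y; z] 0) = x + y + z + 1 by compute_weight.
have w1 : min_weight 4 (occ_bound [:: x; y; z] 1) = x + y + z + 1 by compute_weight; lia.
have w01 : min_weight 4 (fun q => maxn (occ_bound [:: x; y; z] 0 q)
                                      (occ_bound [:: x; y; z] 1 q)) = weight4 x y z.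
  by compute_weight.
rewrite -w01 -card_positive_dominating -positive_dominatingI cardsUI.
by rewrite !card_positive_dominating w0 w1.
Qed.

Lemma Fcoef_len5 :
  Fcoef [:: x; y; z] 5 m + slack_count 5 m (weight4 x y z + 1)
    + slack_count 5 m (weight5_gap x y z) + slack_count 5 m (weight4 x y z + 1) =
  slack_count 5 m (x + y + z + 2) + slack_count 5 m (x + y + z + 2)
    + slack_count 5 m (x + y + z + 2) + slack_count 5 m (weight5_full x y z).
Proof.
rewrite Fcoef_bigcup // /= !big_nat_recr //= big_geq // set0U !setIUr.
set A := _ :&: dominating 5 m (occ_bound _ 0).
set B := _ :&: dominating 5 m (occ_bound _ 1).
set C := _ :&: dominating 5 m (occ_bound _ 2).
have cardA : #|A| = slack_count 5 m (x + y + z + 2).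
  by rewrite card_positive_dominating; congr slack_count; compute_weight; lia.
have cardB : #|B| = slack_count 5 m (x + y + z + 2).
  by rewrite card_positive_dominating; congr slack_count; compute_weight; lia.
have cardC : #|C| = slack_count 5 m (x + y + z + 2).
  by rewrite card_positive_dominating; congr slack_count; compute_weight; lia.
have cardAB : #|A :&: B| = slack_count 5 m (weight4 x y z + 1).
  rewrite positive_dominatingI card_positive_dominating; congr slack_count.
  by compute_weight.
have cardBC : #|B :&: C| = slack_count 5 m (weight4 x y z + 1).
  rewrite positive_dominatingI card_positive_dominating; congr slack_count.
  by compute_weight; rewrite [RHS]addnC /weight4 !addnA.
have cardAC : #|A :&: C| = slack_count 5 m (weight5_gap x y z).
  rewrite positive_dominatingI card_positive_dominating; congr slack_count.
  by compute_weight.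
have cardABC : #|A :&: B :&: C| = slack_count 5 m (weight5_full x y z).
  rewrite !positive_dominatingI card_positive_dominating; congr slack_count.
  by compute_weight.
by have := cardsU3 A B C; rewrite cardA cardB cardC cardAB cardAC cardBC cardABC.
Qed.

End LowCoefficients.

Definition same_invariants x y z x' y' z' : Prop :=
  [/\ x + y + z = x' + y' + z', weight4 x y z = weight4 x' y' z' &
      (weight5_gap x y z = weight5_gap x' y' z' /\
       weight5_full x' y' z' = weight5_full x y z) \/
      (weight5_gap x y z = weight5_full x y z /\
       weight5_full x' y' z' = weight5_gap x' y' z')].

Lemma wilf_same_invariants x y z x' y' z' :
  0 < x -> 0 < y -> 0 < z -> 0 < x' -> 0 < y' -> 0 < z' ->
  wilf [:: x; y; z] [:: x'; y'; z'] -> same_invariants x y z x' y' z'.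
Proof.
move=> x_gt0 y_gt0 z_gt0 x'_gt0 y'_gt0 z'_gt0 eq_F.
have eq_sum : x + y + z = x' + y' + z'.
  by apply: (@slack_count_inj 3) => m; rewrite -!Fcoef_len3 // eq_F.
have eq_weight4 : weight4 x y z = weight4 x' y' z'.
  apply: (@slack_count_inj 4) => m; apply/eqP.
  rewrite -(eqn_add2l (Fcoef [:: x; y; z] 4 m)) Fcoef_len4 //.
  by rewrite eq_F Fcoef_len4 // eq_sum.
split => //; apply: (@slack_count_pair_inj 5) => m.
have := Fcoef_len5 m x_gt0 y_gt0 z_gt0; have := Fcoef_len5 m x'_gt0 y'_gt0 z'_gt0.
rewrite -eq_F -eq_sum -eq_weight4; lia.
Qed.

Lemma wilf_class_of_block (B : seq (seq nat)) a b c :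
  0 < a -> 0 < b -> 0 < c -> [:: a; b; c] \in B ->
  {in B, forall u, wilf [:: a; b; c] u} ->
  (forall x y z, 0 < x -> 0 < y -> 0 < z ->
     same_invariants a b c x y z -> [:: x; y; z] \in B) ->
  forall u, u \in B -> forall v, size v = 3 -> pword v -> (wilf u v <-> v \in B).
Proof.
move=> a_gt0 b_gt0 c_gt0 r_in wilf_r closed u u_in v size_v pos_v.
split=> [eq_uv | v_in].
  case: v size_v pos_v eq_uv => [|x [|y [|z []]]] //= _ /and4P[x_gt0 y_gt0 z_gt0 _] eq_uv.
  apply: closed => //; apply: wilf_same_invariants => //.
  exact: wilf_trans (wilf_r u u_in) eq_uv.
exact: wilf_trans (wilf_sym (wilf_r u u_in)) (wilf_r v v_in).
Qed.

Ltac elim_maxn := repeat match goal with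
  | |- context [maxn ?a ?b] =>
      first [ rewrite (maxn_idPl (_ : b <= a)); last by lia
            | rewrite (maxn_idPr (_ : a <= b)); last by lia ]
  end.

Ltac separate_by_invariants x y z :=
  rewrite /same_invariants /weight4 /weight5_gap /weight5_full !inE !eqseq_cons !andbT;
  case: (leqP x y) => ?; case: (leqP y z) => ?; case: (leqP z x) => ?;
  elim_maxn; case; lia.

Lemma listed_block_wilf_class B : listed_block B ->
  forall u, u \in B -> forall v, size v = 3 -> pword v -> (wilf u v <-> v \in B).
Proof.
case=> [[a [a_gt0 ->]] | [[a [b [a_gt0 [lt_ab ->]]]] |
        [[a [b [b_gt0 [lt_ba [-> | ->]]]]] | [a [b [c [a_gt0 [lt_ab [lt_bc [-> | ->]]]]]]]]]].
- apply: (@wilf_class_of_block _ a a a) => //; first exact: mem_head.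
    by move=> u; rewrite inE => /eqP->.
  by move=> x y z x_gt0 y_gt0 z_gt0; separate_by_invariants x y z.
- have b_gt0 : 0 < b by lia.
  apply: (@wilf_class_of_block _ a a b) => //; first exact: mem_head.
    move=> u; rewrite !inE => /or3P[] /eqP->; first exact: wilf_refl.
      exact: wilf_swap23 a_gt0 (leqnn a) (ltnW lt_ab).
    exact: (wilf_rev [:: a; a; b]).
  by move=> x y z x_gt0 y_gt0 z_gt0; separate_by_invariants x y z.
- have a_gt0 : 0 < a by lia.
  apply: (@wilf_class_of_block _ a a b) => //; first exact: mem_head.
    move=> u; rewrite !inE => /orP[] /eqP->; first exact: wilf_refl.
    exact: (wilf_rev [:: a; a; b]).
  by move=> x y z x_gt0 y_gt0 z_gt0; separate_by_invariants x y z.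
- have a_gt0 : 0 < a by lia.
  apply: (@wilf_class_of_block _ a b a) => //; first exact: mem_head.
    by move=> u; rewrite inE => /eqP->.
  by move=> x y z x_gt0 y_gt0 z_gt0; separate_by_invariants x y z.
- have [b_gt0 c_gt0] : 0 < b /\ 0 < c by lia.
  apply: (@wilf_class_of_block _ b a c) => //; first exact: mem_head.
    move=> u; rewrite !inE => /orP[] /eqP->; first exact: wilf_refl.
    exact: (wilf_rev [:: b; a; c]).
  by move=> x y z x_gt0 y_gt0 z_gt0; separate_by_invariants x y z.
- have [b_gt0 c_gt0] : 0 < b /\ 0 < c by lia.
  have swap_bc := wilf_swap23 b_gt0 (ltnW lt_ab) (ltnW lt_bc).
  apply: (@wilf_class_of_block _ a b c) => //; first exact: mem_head.
    move=> u; rewrite !inE => /or4P[] /eqP->; first exact: wilf_refl.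
    - exact: swap_bc.
    - exact: (wilf_rev [:: a; b; c]).
    - exact: wilf_trans swap_bc (wilf_rev [:: a; c; b]).
  by move=> x y z x_gt0 y_gt0 z_gt0; separate_by_invariants x y z.
Qed.

Lemma listed_block_aaa a : 0 < a -> listed_block [:: [:: a; a; a]].
Proof. by left; exists a. Qed.

Lemma listed_block_aab a b : 0 < a -> a < b ->
  listed_block [:: [:: a; a; b]; [:: a; b; a]; [:: b; a; a]].
Proof. by right; left; exists a, b. Qed.

Lemma listed_block_ends a b : 0 < b -> b < a ->
  listed_block [:: [:: a; a; b]; [:: b; a; a]].
Proof. by right; right; left; exists a, b; do !split => //; left. Qed.

Lemma listed_block_mid a b : 0 < b -> b < a -> listed_block [:: [:: a; b; a]].
Proof. by right; right; left; exists a, b; do !split => //; right. Qed.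

Lemma listed_block_min_mid a b c : 0 < a -> a < b -> b < c ->
  listed_block [:: [:: b; a; c]; [:: c; a; b]].
Proof. by right; right; right; exists a, b, c; do !split => //; left. Qed.

Lemma listed_block_min_end a b c : 0 < a -> a < b -> b < c ->
  listed_block [:: [:: a; b; c]; [:: a; c; b]; [:: c; b; a]; [:: b; c; a]].
Proof. by right; right; right; exists a, b, c; do !split => //; right. Qed.

Ltac cover_with L :=
  solve [eexists; split; [apply: L; lia | by rewrite !inE ?eqxx ?orbT]].

Ltac cover_pairs L x y z :=
  first [cover_with (@L x y) | cover_with (@L y x) | cover_with (@L x z)
        | cover_with (@L z x) | cover_with (@L y z) | cover_with (@L z y)].

Ltac cover_triples L x y z :=
  first [cover_with (@L x y z) | cover_with (@L x z y) | cover_with (@L y x z)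
        | cover_with (@L y z x) | cover_with (@L z x y) | cover_with (@L z y x)].

Ltac cover_word :=
  match goal with |- context [ [:: ?x; ?y; ?z] ] =>
    first [ cover_with (@listed_block_aaa x)
          | cover_pairs listed_block_aab x y z | cover_pairs listed_block_ends x y z
          | cover_pairs listed_block_mid x y z
          | cover_triples listed_block_min_mid x y z
          | cover_triples listed_block_min_end x y z ]
  end.

Lemma listed_block_cover u : size u = 3 -> pword u ->
  exists B, listed_block B /\ u \in B.
Proof.
case: u => [|x [|y [|z []]]] //= _ /and4P[x_gt0 y_gt0 z_gt0 _].
by case: (ltngtP x y) => [?|?|?]; case: (ltngtP y z) => [?|?|?];
  case: (ltngtP x z) => [?|?|?]; subst; try lia; cover_word.
Qed.

Theorem theorem7 :
  (forall u : seq nat, size u = 3 -> pword u ->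
     exists B, listed_block B /\ u \in B) /\
  (forall B, listed_block B -> forall u, u \in B ->
     forall v : seq nat, size v = 3 -> pword v -> (wilf u v <-> v \in B)).
Proof. by split; [exact: listed_block_cover | exact: listed_block_wilf_class]. Qed.
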